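(* Let $k,n\in\mathbb{N}$ with $k<n$, and let $A\in\mathbb{R}^{k\times k}$ and $B\in\mathbb{R}^{n\times n}$ be symmetric positive definite. Let $\iota_k:\mathbb{R}^k\hookrightarrow\mathbb{R}^n$ be any isometric embedding and set $B^{[\alpha]}:=\iota_k^*B^\alpha\iota_k$ for $\alpha\in\mathbb{R}$. Then for every $\alpha\in\mathbb{R}$ and all $j=1,\dots,k$, $$\lambda_j\big(B^{[\alpha/2]}AB^{[\alpha/2]}\big)\le\lambda_j\big((B^{[\alpha]})^{1/2}A(B^{[\alpha]})^{1/2}\big),$$ where $\lambda_1(\cdot)\le\lambda_2(\cdot)\le\dots$ denote eigenvalues in increasing order (with multiplicity). *)

From HB Require Import structures.
From mathcomp Require Import all_boot all_order all_algebra.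
From mathcomp Require Import boolp reals exp.
Set Implicit Arguments. Unset Strict Implicit. Unset Printing Implicit Defensive.
Import Order.TTheory GRing.Theory Num.Theory.
Local Open Scope ring_scope.

Definition orthogonalmx (R : realType) n (U : 'M[R]_n) : Prop :=
  U *m U^T = 1%:M.

Definition spd (R : realType) n (A : 'M[R]_n) : Prop :=
  A^T = A /\ forall v : 'rV[R]_n, v != 0 -> 0 < (v *m A *m v^T) 0 0.

Definition spec_decomp (R : realType) n (B : 'M[R]_n) (p : 'M[R]_n * 'rV[R]_n)
  : Prop :=
  orthogonalmx p.1 /\ (forall i, 0 < p.2 0 i) /\
  B = p.1^T *m diag_mx p.2 *m p.1.

(* real power B^a of a symmetric positive definite matrix, via its spectral
   decomposition: B^a = U^T diag(d_i^a) U (independent of the choice of the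
   decomposition).  Junk value 0 if B has no such decomposition. *)
Definition mpow (R : realType) n (B : 'M[R]_n) (a : R) : 'M[R]_n :=
  match pselect (exists p, spec_decomp B p) with
  | left h => let p := proj1_sig (cid h) in
      p.1^T *m diag_mx (map_mx (fun x => powR x a) p.2) *m p.1
  | right _ => 0
  end.

(* eigenvalues with multiplicity, in increasing order: the sorted list of
   roots of the characteristic polynomial (when it splits over R, as it does
   for symmetric matrices); junk value [::] otherwise. *)
Definition eigs (R : realType) n (M : 'M[R]_n) : seq R :=
  match pselect (exists s : seq R, sorted <=%R s /\
                   char_poly M = \prod_(x <- s) ('X - x%:P)) with
  | left h => proj1_sig (cid h)
  | right _ => [::]
  end.

(* lambda_{j+1}(M), 0-based index j *)
Definition eigval (R : realType) n (M : 'M[R]_n) (j : nat) : R :=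
  nth 0 (eigs M) j.

From mathcomp Require Import all_boot all_order all_algebra.
From mathcomp Require Import boolp reals exp complex ring lra.
Import Order.TTheory GRing.Theory Num.Theory.
Local Open Scope ring_scope.

(* Write C = A^(1/2) and P = B^[alpha/2].  The matrix P A P = (P C)(C P) has
   the spectrum of (C P)(P C) = C P^2 C, and likewise the matrix
   (B^[alpha])^(1/2) A (B^[alpha])^(1/2) has the spectrum of C B^[alpha] C.
   As iota iota^T is an orthogonal projection,
     P^2 = iota^T B^(alpha/2) (iota iota^T) B^(alpha/2) iota
         <= iota^T B^alpha iota = B^[alpha]
   in the Loewner order, hence C P^2 C <= C B^[alpha] C, and the
   Courant-Fischer principle compares the eigenvalues one by one. *)

Section CharPoly.
Set Implicit Arguments. Unset Strict Implicit.
Variable F : fieldType.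

Lemma char_poly_similar n (P A : 'M[F]_n) :
  P \in unitmx -> char_poly (invmx P *m A *m P) = char_poly A.
Proof.
move=> Pu; rewrite /char_poly /char_poly_mx.
set Pi := map_mx polyC (invmx P); set Pp := map_mx polyC P.
have PiPp : Pi *m Pp = 1%:M by rewrite -map_mxM mulVmx // map_mx1.
have -> : 'X%:M = Pi *m 'X%:M *m Pp :> 'M_n.
  by rewrite -mulmxA -scalar_mxC mulmxA PiPp mul1mx.
rewrite !map_mxM -/Pi -/Pp -mulmxBl -mulmxBr !det_mulmx mulrAC -det_mulmx.
by rewrite PiPp det1 mul1r -mulmxA -scalar_mxC mulmxA PiPp mul1mx.
Qed.

Lemma char_poly_mulmxC n (X Y : 'M[F]_n) :
  X \in unitmx -> char_poly (X *m Y) = char_poly (Y *m X).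
Proof.
move=> Xu; rewrite -(char_poly_similar (X *m Y) Xu).
by rewrite !mulmxA mulVmx // mul1mx.
Qed.

Lemma char_poly_diag n (d : 'rV[F]_n) :
  char_poly (diag_mx d) = \prod_(i < n) ('X - (d 0 i)%:P).
Proof.
rewrite char_poly_trig ?diag_mx_is_trig //.
by apply: eq_bigr => i _; rewrite mxE eqxx mulr1n.
Qed.

End CharPoly.

Section Spectral.
Set Implicit Arguments. Unset Strict Implicit.
Variable R : realType.

Lemma sqnorm_sum n (v : 'rV[R]_n) : (v *m v^T) 0 0 = \sum_i v 0 i ^+ 2.
Proof. by rewrite !mxE; apply: eq_bigr => i _; rewrite mxE expr2. Qed.

Lemma sqnorm_ge0 n (v : 'rV[R]_n) : 0 <= (v *m v^T) 0 0.
Proof. by rewrite sqnorm_sum; apply: sumr_ge0 => i _; exact: sqr_ge0. Qed.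

Lemma sqnorm_gt0 n (v : 'rV[R]_n) : v != 0 -> 0 < (v *m v^T) 0 0.
Proof.
move=> vn0; rewrite lt_def sqnorm_ge0 andbT sqnorm_sum.
apply: contra vn0 => /eqP/psumr_eq0P v0; apply/eqP/rowP => i.
by apply/eqP; rewrite mxE -sqrf_eq0 v0 // => k _; exact: sqr_ge0.
Qed.

Lemma orthogonalmx_trmul n (U : 'M[R]_n) : orthogonalmx U -> U^T *m U = 1%:M.
Proof. exact: mulmx1C. Qed.

Lemma orthogonalmx_unit n (U : 'M[R]_n) : orthogonalmx U -> U \in unitmx.
Proof. by move=> UU; case: (mulmx1_unit UU). Qed.

Lemma orthogonalmx_inv n (U : 'M[R]_n) : orthogonalmx U -> invmx U = U^T.
Proof.
move=> UU; rewrite -[invmx U]mulmx1 -UU mulmxA.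
by rewrite mulVmx ?orthogonalmx_unit // mul1mx.
Qed.

Lemma orthogonalmx_mul n (U V : 'M[R]_n) :
  orthogonalmx U -> orthogonalmx V -> orthogonalmx (U *m V).
Proof.
move=> UU VV; rewrite /orthogonalmx trmx_mul mulmxA -(mulmxA U) VV mulmx1.
exact: UU.
Qed.

Lemma eigs_prod_XsubC n (M : 'M[R]_n) (s : seq R) :
  char_poly M = \prod_(x <- s) ('X - x%:P) -> eigs M = sort <=%R s.
Proof.
move=> Ms; have sort_s := sort_sorted (@le_total _ R) s.
rewrite /eigs; case: pselect => [h|[]]; last first.
  exists (sort <=%R s); rewrite Ms; split=> //.
  by apply: perm_big; rewrite perm_sym perm_sort.
case: (cid h) => t [st Mt] /=.
apply: (sorted_eq le_trans le_anti) => //.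
by rewrite perm_sym perm_sort perm_sym; apply: prod_XsubC_eq; rewrite -Mt.
Qed.

Lemma eigval_mulmxC n (X Y : 'M[R]_n) j :
  X \in unitmx -> eigval (X *m Y) j = eigval (Y *m X) j.
Proof. by move=> Xu; rewrite /eigval /eigs char_poly_mulmxC. Qed.

Lemma eigs_spectral n (U : 'M[R]_n) (d : 'rV[R]_n) : orthogonalmx U ->
  eigs (U^T *m diag_mx d *m U) = sort <=%R [seq d 0 i | i <- enum 'I_n].
Proof.
move=> UU; apply: eigs_prod_XsubC.
rewrite -(orthogonalmx_inv UU) char_poly_similar ?orthogonalmx_unit //.
by rewrite char_poly_diag big_map big_enum.
Qed.

(* The spectral theorem over C makes the characteristic polynomial of a real
   symmetric matrix split over R. *)
Lemma sym_char_poly_split n (M : 'M[R]_n) : M^T = M ->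
  exists s : seq R, char_poly M = \prod_(x <- s) ('X - x%:P).
Proof.
move=> Msym; pose f := real_complex R; pose MC := map_mx f M.
have MCh : MC \is hermsymmx.
  apply: realsym_hermsym.
    apply/is_hermitianmxP.
    by rewrite expr0 scale1r map_mx_id // /MC map_trmx Msym.
  by apply/mxOverP => i j; rewrite mxE; apply/complex_realP; exists (M i j).
have /orthomx_spectralP MCE := hermitian_normalmx MCh.
have MCreal := hermitian_spectral_diag_real MCh.
exists [seq complex.Re (spectral_diag MC 0 i) | i <- enum 'I_n].
apply: (@map_poly_inj _ _ f).
rewrite map_char_poly -/MC {1}MCE char_poly_similar ?spectral_unit //.
rewrite char_poly_diag rmorph_prod big_map big_enum /=; apply: eq_bigr => i _.
by rewrite rmorphB /= map_polyX map_polyC /= RRe_real //; exact: mxOverP.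
Qed.

Lemma sym_unit_eigenvector n (M : 'M[R]_n.+1) : M^T = M ->
  exists a (u : 'rV[R]_n.+1), (u *m u^T) 0 0 = 1 /\ u *m M = a *: u.
Proof.
move=> Msym; have [s Ms] := sym_char_poly_split Msym.
have : size s = n.+1.
  by have := size_char_poly M; rewrite Ms size_prod_XsubC => -[].
case: s Ms => // a s Ms _.
have : eigenvalue M a.
  by rewrite eigenvalue_root_char Ms root_prod_XsubC mem_head.
case/eigenvalueP => v vM vn0; have v_gt0 := sqnorm_gt0 vn0.
exists a, ((Num.sqrt ((v *m v^T) 0 0))^-1 *: v); split.
  rewrite linearZ /= -scalemxAl -scalemxAr scalerA mxE -expr2 exprVn.
  by rewrite sqr_sqrtr ?ltW // mulVf ?gt_eqF.
by rewrite -scalemxAl vM scalerA mulrC -scalerA.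
Qed.

(* The reflection in the hyperplane orthogonal to u - e_0. *)
Lemma householder n (u : 'rV[R]_n.+1) : (u *m u^T) 0 0 = 1 ->
  exists H : 'M[R]_n.+1, [/\ H^T = H, orthogonalmx H & delta_mx 0 0 *m H = u].
Proof.
move=> u1; set e : 'rV[R]_n.+1 := delta_mx 0 0.
have [ue|wn0] := eqVneq (u - e) 0.
  exists 1%:M; split; first exact: trmx1.
    by rewrite /orthogonalmx trmx1 mulmx1.
  by rewrite mulmx1; apply/esym/eqP; rewrite -subr_eq0 ue.
set w := u - e in wn0 *; set c := (w *m w^T) 0 0.
have c_gt0 : 0 < c := sqnorm_gt0 wn0.
have cE : c = - 2 * w 0 0.
  move: u1; rewrite /c !sqnorm_sum !big_ord_recl.
  under [in X in _ -> X]eq_bigr => i _ do rewrite /w !mxE /= subr0.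
  by rewrite /w !mxE eqxx /=; lra.
set W := w^T *m w.
have WW : W *m W = c *: W.
  rewrite /W mulmxA -(mulmxA w^T) [w *m w^T]mx11_scalar.
  by rewrite mul_mx_scalar -scalemxAl.
set H := 1%:M - (2 / c) *: W.
have Hsym : H^T = H by rewrite /H linearB /= trmx1 linearZ /= /W trmx_mul trmxK.
exists H; split=> //.
- rewrite /orthogonalmx Hsym /H mulmxBl mul1mx mulmxBr mulmx1.
  rewrite -scalemxAl -scalemxAr WW !scalerA.
  have -> : 2 / c * (2 / c) * c = 2 / c + 2 / c by field; rewrite gt_eqF.
  by rewrite scalerDl opprD opprK !addrA !subrK.
- have ew : (e *m w^T) 0 0 = w 0 0 by rewrite -rowE !mxE.
  rewrite /H mulmxBr mulmx1 -scalemxAr /W mulmxA [e *m w^T]mx11_scalar ew.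
  rewrite mul_scalar_mx scalerA.
  have -> : 2 / c * w 0 0 = -1 by rewrite cE; field; rewrite cE in c_gt0; lra.
  by rewrite scaleN1r opprK /w addrC subrK.
Qed.

Lemma sym_eigenrow_block n (N : 'M[R]_(1 + n)) a :
  N^T = N -> row 0 N = a *: delta_mx 0 0 -> N = block_mx a%:M 0 0 (drsubmx N).
Proof.
move=> Nsym N0; have N0E k : N 0 k = a * (k == 0)%:R.
  by move/matrixP: N0 => /(_ 0 k); rewrite !mxE eqxx.
have lshift0 : lshift n (0 : 'I_1) = 0 by exact: val_inj.
rewrite -{1}(submxK N); congr block_mx; apply/matrixP => i j.
- by rewrite !mxE (ord1 i) (ord1 j) lshift0 N0E eqxx mulr1.
- by rewrite !mxE (ord1 i) lshift0 N0E mulr0.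
- by rewrite !mxE (ord1 j) -[N]Nsym mxE lshift0 N0E mulr0.
Qed.

Theorem sym_spectral n (M : 'M[R]_n) : M^T = M ->
  exists (U : 'M[R]_n) (d : 'rV[R]_n),
    orthogonalmx U /\ M = U^T *m diag_mx d *m U.
Proof.
elim: n M => [|n IH] M Msym.
  exists 1%:M, 0; split; first by rewrite /orthogonalmx trmx1 mulmx1.
  by apply/matrixP => -[].
have [a [u [u1 uM]]] := sym_unit_eigenvector Msym.
have [H [Hsym HH eH]] := householder u1.
have {}HH : H *m H = 1%:M by rewrite -{2}Hsym.
pose N : 'M[R]_(1 + n) := H *m M *m H.
have Nsym : N^T = N by rewrite !trmx_mul Hsym Msym mulmxA.
have N0 : row 0 N = a *: delta_mx 0 0.
  by rewrite rowE !mulmxA eH uM -!scalemxAl -eH -mulmxA HH mulmx1.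
have [U' [d' [U'U M'E]]] : exists U' d', orthogonalmx U' /\
    drsubmx N = U'^T *m diag_mx d' *m U' by apply: IH; rewrite trmx_drsub Nsym.
pose V : 'M[R]_(1 + n) := block_mx 1%:M 0 0 U'.
have VV : orthogonalmx V.
  rewrite /orthogonalmx tr_block_mx mulmx_block !trmx0 trmx1 !mulmx0 !mul0mx.
  by rewrite !addr0 !add0r mulmx1 U'U -scalar_mx_block.
exists (V *m H), (row_mx (const_mx a : 'rV_1) d'); split.
  by apply: orthogonalmx_mul => //; rewrite /orthogonalmx Hsym.
have Nblk : V^T *m diag_mx (row_mx (const_mx a : 'rV_1) d') *m V =
    block_mx a%:M 0 0 (U'^T *m diag_mx d' *m U').
  rewrite /V tr_block_mx diag_mx_row !trmx0 trmx1 !mulmx_block.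
  rewrite !(mulmx0, mul0mx, mulmx1, mul1mx, addr0, add0r); congr block_mx.
  by apply/matrixP => i j; rewrite (ord1 i) (ord1 j) !mxE.
have -> : M = H *m N *m H by rewrite /N !mulmxA HH mul1mx -mulmxA HH mulmx1.
by rewrite (sym_eigenrow_block Nsym N0) M'E -Nblk trmx_mul Hsym !mulmxA.
Qed.

End Spectral.

Section SortedCount.
Set Implicit Arguments. Unset Strict Implicit.
Variables (disp : Order.disp_t) (T : porderType disp) (x0 : T).

Lemma count_le_nth_sorted (s : seq T) j : sorted <=%O s -> (j < size s)%N ->
  (j < count [pred x | (x <= nth x0 s j)%O] s)%N.
Proof.
move=> s_sorted js.
have all_take : all [pred x | (x <= nth x0 s j)%O] (take j.+1 s).
  apply/(all_nthP x0) => i; rewrite size_takel // => ij.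
  rewrite nth_take //=; apply: le_sorted_leq_nth; rewrite ?inE //.
  exact: leq_ltn_trans js.
rewrite -[s in count _ s](cat_take_drop j.+1) count_cat.
by move: all_take; rewrite all_count => /eqP ->; rewrite size_takel // leq_addr.
Qed.

Lemma count_ge_nth_sorted (s : seq T) j : sorted <=%O s -> (j < size s)%N ->
  (size s - j <= count [pred x | (nth x0 s j <= x)%O] s)%N.
Proof.
move=> s_sorted js.
have all_drop : all [pred x | (nth x0 s j <= x)%O] (drop j s).
  apply/(all_nthP x0) => i; rewrite size_drop => ij.
  rewrite nth_drop /=; apply: le_sorted_leq_nth; rewrite ?inE ?leq_addr //.
  by rewrite -ltn_subRL.
rewrite -[s in count _ s](cat_take_drop j) count_cat.
by move: all_drop; rewrite all_count => /eqP ->; rewrite size_drop leq_addl.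
Qed.

End SortedCount.

Section MinMax.
Set Implicit Arguments. Unset Strict Implicit.
Variable R : realType.

Definition loewner_le n (M N : 'M[R]_n) : Prop :=
  forall v : 'rV[R]_n, (v *m M *m v^T) 0 0 <= (v *m N *m v^T) 0 0.

Lemma quad_diag n (d v : 'rV[R]_n) :
  (v *m diag_mx d *m v^T) 0 0 = \sum_i d 0 i * v 0 i ^+ 2.
Proof.
by rewrite mul_mx_diag !mxE; apply: eq_bigr => i _; rewrite !mxE; ring.
Qed.

Lemma quad_spectral n (U : 'M[R]_n) (d v : 'rV[R]_n) : orthogonalmx U ->
  (v *m (U^T *m diag_mx d *m U) *m v^T) 0 0 =
  \sum_i d 0 i * (v *m U^T) 0 i ^+ 2.
Proof. by move=> UU; rewrite -quad_diag trmx_mul trmxK !mulmxA. Qed.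

Lemma sqnorm_orthogonal n (U : 'M[R]_n) (v : 'rV[R]_n) : orthogonalmx U ->
  (v *m v^T) 0 0 = \sum_i (v *m U^T) 0 i ^+ 2.
Proof.
move=> UU; rewrite -sqnorm_sum trmx_mul trmxK mulmxA -(mulmxA v).
by rewrite (orthogonalmx_trmul UU) mulmx1.
Qed.

Lemma rank_diag_mx_le n (d : 'rV[R]_n) :
  (\rank (diag_mx d) <= #|[pred i | (d 0 i != 0)%R]|)%N.
Proof.
rewrite diag_mx_sum_delta (bigID [pred i | d 0 i != 0]) /=.
rewrite [X in (_ + X)%R]big1 ?addr0 => [|i /negPn/eqP ->]; last first.
  by rewrite scale0r.
rewrite -sum1_card.
apply: (big_ind2 (fun (A : 'M[R]_n) k => \rank A <= k)%N).
- by rewrite mxrank0.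
- by move=> A k B l rA rB; exact: leq_trans (mxrank_add A B) (leq_add rA rB).
- move=> i _; rewrite -mul_scalar_mx.
  by rewrite (leq_trans (mxrankM_maxr _ _)) ?mxrank_delta.
Qed.

(* The vectors whose coordinates in the orthonormal basis formed by the rows
   of U vanish outside P. *)
Definition coordker n (U : 'M[R]_n) (P : pred 'I_n) :=
  kermx (U^T *m diag_mx (\row_i (~~ P i)%:R)).

Lemma coordker_rank n (U : 'M[R]_n) (P : pred 'I_n) :
  (#|P| <= \rank (coordker U P))%N.
Proof.
rewrite mxrank_ker; apply: leq_trans (leq_sub2l _ (mxrankM_maxr _ _)).
apply: leq_trans (leq_sub2l _ (rank_diag_mx_le _)).
rewrite [X in (_ <= _ - X)%N](eq_card (B := predC P)) => [|i]; last first.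
  by rewrite !inE mxE; case: (P i); rewrite ?eqxx ?oner_eq0.
by rewrite -[n in (_ <= n - _)%N](card_ord n) -(cardC P) addnK.
Qed.

Lemma coordker_coord n (U : 'M[R]_n) (P : pred 'I_n) (v : 'rV[R]_n) i :
  (v <= coordker U P)%MS -> ~~ P i -> (v *m U^T) 0 i = 0.
Proof.
move=> /sub_kermxP /matrixP /(_ 0 i) + nPi; rewrite mulmxA; set y := v *m U^T.
by rewrite mul_mx_diag !mxE nPi mulr1.
Qed.

Lemma quad_spectral_le n (U : 'M[R]_n) (d v : 'rV[R]_n) mu :
  orthogonalmx U -> (v <= coordker U [pred i | (d 0 i <= mu)%R])%MS ->
  (v *m (U^T *m diag_mx d *m U) *m v^T) 0 0 <= mu * (v *m v^T) 0 0.
Proof.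
move=> UU vS; rewrite quad_spectral // (sqnorm_orthogonal v UU) mulr_sumr.
apply: ler_sum => i _; have [dmu|dmu] := boolP (d 0 i <= mu).
  by rewrite ler_wpM2r // sqr_ge0.
by rewrite (coordker_coord vS) // expr2 !mulr0.
Qed.

Lemma quad_spectral_ge n (U : 'M[R]_n) (d v : 'rV[R]_n) lam :
  orthogonalmx U -> (v <= coordker U [pred i | (lam <= d 0 i)%R])%MS ->
  lam * (v *m v^T) 0 0 <= (v *m (U^T *m diag_mx d *m U) *m v^T) 0 0.
Proof.
move=> UU vS; rewrite quad_spectral // (sqnorm_orthogonal v UU) mulr_sumr.
apply: ler_sum => i _; have [dlam|dlam] := boolP (lam <= d 0 i).
  by rewrite ler_wpM2r // sqr_ge0.
by rewrite (coordker_coord vS) // expr2 !mulr0.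
Qed.

Lemma cap_nonzero n m1 m2 (S1 : 'M[R]_(m1, n)) (S2 : 'M[R]_(m2, n)) :
  (n < \rank S1 + \rank S2)%N ->
  exists2 v : 'rV[R]_n, v != 0 & (v <= S1 :&: S2)%MS.
Proof.
move=> rankS; have /rowV0Pn[v vS vn0] : (S1 :&: S2)%MS != 0.
  rewrite -mxrank_eq0; apply: contraTneq rankS => cap0.
  by rewrite -leqNgt -mxrank_sum_cap cap0 addn0 rank_leq_col.
by exists v.
Qed.

Lemma count_sort_map n (f : 'I_n -> R) (p : pred R) :
  count p (sort <=%R [seq f i | i <- enum 'I_n]) = #|[pred i | p (f i)]|.
Proof.
by rewrite count_sort count_map -sum1_count big_enum_cond -sum1_card.
Qed.

(* Courant-Fischer: the span of the eigenvectors of M for the eigenvalues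
   >= lambda_j(M) (dimension >= n - j) meets the span of the eigenvectors of
   N for the eigenvalues <= lambda_j(N) (dimension >= j + 1). *)
Lemma spectral_nth_sort_le n (U V : 'M[R]_n) (d e : 'rV[R]_n) (j : 'I_n) :
  orthogonalmx U -> orthogonalmx V ->
  loewner_le (U^T *m diag_mx d *m U) (V^T *m diag_mx e *m V) ->
  nth 0 (sort <=%R [seq d 0 i | i <- enum 'I_n]) j <=
  nth 0 (sort <=%R [seq e 0 i | i <- enum 'I_n]) j.
Proof.
move=> UU VV de; set lam := nth 0 _ j; set mu := nth 0 _ j.
pose sorted_map (f : 'I_n -> R) := sort <=%R [seq f i | i <- enum 'I_n].
have size_sorted_map f : size (sorted_map f) = n.
  by rewrite size_sort size_map size_enum_ord.
have sorted_sorted_map f : sorted <=%R (sorted_map f).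
  exact: sort_sorted (@le_total _ R) _.
have [v vn0] : exists2 v : 'rV[R]_n, v != 0 &
    (v <= coordker U [pred i | (lam <= d 0 i)%R]
      :&: coordker V [pred i | (e 0 i <= mu)%R])%MS.
  apply: cap_nonzero.
  apply: leq_trans (leq_add (coordker_rank _ _) (coordker_rank _ _)).
  have cardU : (n - j <= #|[pred i | (lam <= d 0 i)%R]|)%N.
    have := count_ge_nth_sorted 0 (sorted_sorted_map (fun i => d 0 i)) (j := j).
    by rewrite size_sorted_map count_sort_map; apply.
  have cardV : (j < #|[pred i | (e 0 i <= mu)%R]|)%N.
    have := count_le_nth_sorted 0 (sorted_sorted_map (fun i => e 0 i)) (j := j).
    by rewrite size_sorted_map count_sort_map; apply.
  apply: leq_trans (leq_add cardU cardV).
  by rewrite addnS subnK // ltnW.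
rewrite sub_capmx => /andP[vU vV]; rewrite -(ler_pM2r (sqnorm_gt0 vn0)).
apply: le_trans (quad_spectral_ge UU vU) _.
exact: le_trans (de v) (quad_spectral_le VV vV).
Qed.

Theorem sym_eigval_mono n (M N : 'M[R]_n) (j : 'I_n) :
  M^T = M -> N^T = N -> loewner_le M N -> eigval M j <= eigval N j.
Proof.
move=> /sym_spectral[U [d [UU ->]]] /sym_spectral[V [e [VV ->]]] MN.
by rewrite /eigval !eigs_spectral //; exact: (spectral_nth_sort_le _ UU VV MN).
Qed.

End MinMax.

Section MatrixPower.
Set Implicit Arguments. Unset Strict Implicit.
Variable R : realType.

Lemma spd_compress m n (M : 'M[R]_n) (X : 'M[R]_(m, n)) :
  spd M -> row_free X -> spd (X *m M *m X^T).
Proof.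
move=> [Msym Mpos] Xfree; split; first by rewrite !trmx_mul trmxK Msym mulmxA.
move=> v vn0; rewrite !mulmxA -(mulmxA _ X^T) -trmx_mul.
by apply: Mpos; rewrite mulmx_free_eq0.
Qed.

Lemma spd_unit n (M : 'M[R]_n) : spd M -> M \in unitmx.
Proof.
move=> [_ Mpos]; rewrite -row_free_unit; apply: inj_row_free => v vM0.
by apply/eqP; apply: contraT => /Mpos; rewrite vM0 mul0mx mxE ltxx.
Qed.

Lemma spd_diag n (d : 'rV[R]_n) : (forall i, 0 < d 0 i) -> spd (diag_mx d).
Proof.
move=> dpos; split=> [|v vn0]; first exact: tr_diag_mx.
rewrite quad_diag lt_def sumr_ge0 ?andbT => [|i _]; last first.
  by rewrite mulr_ge0 ?sqr_ge0 ?ltW.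
apply: contra vn0 => /eqP/psumr_eq0P v0; apply/eqP/rowP => i; apply/eqP.
rewrite mxE -sqrf_eq0 -(mulrI_eq0 _ (lregP (lt0r_neq0 (dpos i)))) v0 // => k _.
by rewrite mulr_ge0 ?sqr_ge0 ?ltW.
Qed.

Lemma spd_spectral n (U : 'M[R]_n) (d : 'rV[R]_n) :
  orthogonalmx U -> (forall i, 0 < d 0 i) -> spd (U^T *m diag_mx d *m U).
Proof.
move=> UU dpos; rewrite -[U in _ *m U]trmxK.
apply: spd_compress (spd_diag dpos) _.
by apply/row_freeP; exists U; exact: orthogonalmx_trmul.
Qed.

Lemma spd_spectral_pos n (B U : 'M[R]_n) (d : 'rV[R]_n) i :
  spd B -> orthogonalmx U -> B = U^T *m diag_mx d *m U -> 0 < d 0 i.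
Proof.
move=> [_ Bpos] UU BE; have e_i_n0 : delta_mx 0 i != 0 :> 'rV[R]_n.
  apply/eqP => /matrixP/(_ 0 i).
  by rewrite !mxE !eqxx => /eqP; rewrite oner_eq0.
have e_iU_n0 : (delta_mx 0 i : 'rV[R]_n) *m U != 0.
  by rewrite mulmx_free_eq0 ?row_free_unit ?orthogonalmx_unit.
move: (Bpos _ e_iU_n0); rewrite BE trmx_mul !mulmxA -(mulmxA _ U U^T) UU mulmx1.
rewrite -(mulmxA _ U U^T) UU mulmx1 -rowE row_diag_mx -scalemxAl.
by rewrite trmx_delta mul_delta_mx !mxE eqxx mulr1.
Qed.

Lemma mpow_spectral n (B : 'M[R]_n) : spd B ->
  exists (U : 'M[R]_n) (d : 'rV[R]_n),
    [/\ orthogonalmx U, forall i, 0 < d 0 i, B = U^T *m diag_mx d *m U &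
        forall a,
          mpow B a = U^T *m diag_mx (map_mx (fun x => powR x a) d) *m U].
Proof.
move=> hB; rewrite /mpow; case: pselect => [h|[]]; last first.
  have [U [d [UU BE]]] := sym_spectral hB.1.
  by exists (U, d); split=> //; split=> // i; exact: spd_spectral_pos hB UU BE.
by case: (cid h) => -[U d] [/= UU [dpos BE]]; exists U, d.
Qed.

Section SpdPower.
Variables (n : nat) (B : 'M[R]_n).
Hypothesis hB : spd B.

Lemma mpowD a b : mpow B a *m mpow B b = mpow B (a + b).
Proof.
have [U [d [UU dpos _ mpowE]]] := mpow_spectral hB.
rewrite !mpowE !mulmxA -(mulmxA _ U) UU mulmx1 -(mulmxA U^T) mulmx_diag.
congr (_ *m diag_mx _ *m _); apply/rowP => i.
by rewrite !mxE powRD // (gt_eqF (dpos i)) implybT.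
Qed.

Lemma mpow1 : mpow B 1 = B.
Proof.
have [U [d [_ dpos -> ->]]] := mpow_spectral hB.
by congr (_ *m diag_mx _ *m _); apply/rowP => i; rewrite !mxE powRr1 ?ltW.
Qed.

Lemma tr_mpow a : (mpow B a)^T = mpow B a.
Proof.
have [U [d [_ _ _ ->]]] := mpow_spectral hB.
by rewrite !trmx_mul tr_diag_mx trmxK mulmxA.
Qed.

Lemma spd_mpow a : spd (mpow B a).
Proof.
have [U [d [UU dpos _ ->]]] := mpow_spectral hB.
by apply: spd_spectral => // i; rewrite mxE powR_gt0.
Qed.

Lemma mpow_half a : mpow B (a / 2) *m mpow B (a / 2) = mpow B a.
Proof. by rewrite mpowD -splitr. Qed.

End SpdPower.

Lemma eigval_sandwich k (A X : 'M[R]_k) j : spd A -> X \in unitmx ->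
  eigval (X *m A *m X) j =
  eigval (mpow A (1 / 2) *m (X *m X) *m mpow A (1 / 2)) j.
Proof.
move=> hA Xu; set C := mpow A (1 / 2).
have CC : C *m C = A by rewrite mpow_half // mpow1.
have CXu : X *m C \in unitmx.
  by rewrite unitmx_mul Xu (spd_unit (spd_mpow hA _)).
by rewrite -{1}CC !mulmxA -(mulmxA (X *m C)) eigval_mulmxC // !mulmxA.
Qed.

Lemma sym_sandwich n (X M : 'M[R]_n) :
  X^T = X -> M^T = M -> (X *m M *m X)^T = X *m M *m X.
Proof. by move=> Xsym Msym; rewrite !trmx_mul Xsym Msym mulmxA. Qed.

Lemma loewner_le_congr m n (M N : 'M[R]_n) (X : 'M[R]_(m, n)) :
  loewner_le M N -> loewner_le (X *m M *m X^T) (X *m N *m X^T).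
Proof.
by move=> MN v; rewrite !mulmxA -!(mulmxA _ X^T) -trmx_mul; apply: MN.
Qed.

Lemma sqnorm_isometry_le n k (iota : 'M[R]_(n, k)) (z : 'rV[R]_n) :
  iota^T *m iota = 1%:M ->
  ((z *m iota) *m (z *m iota)^T) 0 0 <= (z *m z^T) 0 0.
Proof.
move=> iso; set p : 'M[R]_n := 1%:M - iota *m iota^T.
have pp : p *m p^T = p.
  rewrite /p linearB /= trmx1 trmx_mul trmxK mulmxBl mul1mx mulmxBr mulmx1.
  by rewrite mulmxA -(mulmxA iota iota^T iota) iso mulmx1 subrr subr0.
have -> : z *m z^T =
    (z *m iota) *m (z *m iota)^T + (z *m p) *m (z *m p)^T.
  rewrite (trmx_mul z p) mulmxA -(mulmxA z p) pp /p mulmxBr mulmx1 mulmxBl.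
  by rewrite trmx_mul !mulmxA addrC subrK.
by rewrite [X in _ <= X]mxE lerDl sqnorm_ge0.
Qed.

Lemma loewner_le_compress_sqr n k (iota : 'M[R]_(n, k)) (S : 'M[R]_n) :
  iota^T *m iota = 1%:M -> S^T = S ->
  loewner_le ((iota^T *m S *m iota) *m (iota^T *m S *m iota))
             (iota^T *m (S *m S) *m iota).
Proof.
move=> iso Ssym v; set z := v *m iota^T *m S.
have -> : v *m ((iota^T *m S *m iota) *m (iota^T *m S *m iota)) *m v^T =
          (z *m iota) *m (z *m iota)^T.
  by rewrite /z !trmx_mul trmxK Ssym !mulmxA.
have -> : v *m (iota^T *m (S *m S) *m iota) *m v^T = z *m z^T.
  by rewrite /z !trmx_mul trmxK Ssym !mulmxA.
exact: sqnorm_isometry_le.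
Qed.

End MatrixPower.

Theorem lemma3p1 (R : realType) (k n : nat) (hkn : (k < n)%N)
  (A : 'M[R]_k) (B : 'M[R]_n) (hA : spd A) (hB : spd B)
  (iota : 'M[R]_(n, k)) (hiota : iota^T *m iota = 1%:M) (alpha : R) (j : 'I_k) :
  let Bb := fun a : R => iota^T *m mpow B a *m iota in
  eigval (Bb (alpha / 2) *m A *m Bb (alpha / 2)) j <=
  eigval (mpow (Bb alpha) (1 / 2) *m A *m mpow (Bb alpha) (1 / 2)) j.
Proof.
cbv zeta; set Bb := fun a : R => _.
have iota_free : row_free iota^T by apply/row_freeP; exists iota.
have spd_Bb a : spd (Bb a).
  rewrite /Bb -[iota in _ *m iota]trmxK.
  by apply: spd_compress => //; exact: spd_mpow.
have sqrt_Bb : mpow (Bb alpha) (1 / 2) *m mpow (Bb alpha) (1 / 2) = Bb alpha.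
  by rewrite mpow_half // mpow1.
rewrite (eigval_sandwich _ hA (spd_unit (spd_Bb _))).
rewrite (eigval_sandwich _ hA (spd_unit (spd_mpow (spd_Bb alpha) _))) sqrt_Bb.
apply: sym_eigval_mono.
- by rewrite sym_sandwich ?tr_mpow // trmx_mul (spd_Bb _).1.
- by rewrite sym_sandwich ?tr_mpow // (spd_Bb _).1.
have := loewner_le_congr (mpow A (1 / 2))
  (loewner_le_compress_sqr hiota (tr_mpow hB (alpha / 2))).
by rewrite tr_mpow // mpow_half.
Qed.
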